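(* For every $K\geq 2$ there exists a map $f:[0,1]\to[0,1]$ without forbidden order patterns of length $L\leq K$; that is, for every $2\leq L\leq K$ and every $\pi\in\mathcal{S}_L$ there is $x\in[0,1]$ that defines $\pi$ under $f$.
   Context: $\mathcal{S}_L$ is the set of permutations $\pi=[\pi_0,\dots,\pi_{L-1}]$ of $\{0,\dots,L-1\}$. A point $x$ defines $\pi$ under $f$ if $f^{\pi_0}(x)<f^{\pi_1}(x)<\dots<f^{\pi_{L-1}}(x)$, with $f^0(x)=x$. A pattern $\pi$ is forbidden for $f$ if no point defines it. *)

From Stdlib Require Import Reals.
From HB Require Import structures.
From mathcomp Require Import all_boot all_order all_algebra all_fingroup.
From mathcomp Require Import Rstruct.
Set Implicit Arguments. Unset Strict Implicit. Unset Printing Implicit Defensive.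
Import Order.TTheory GRing.Theory Num.Theory.
Local Open Scope ring_scope.

Definition fiter (f : Rdefinitions.R -> Rdefinitions.R) (k : nat) (x : Rdefinitions.R) : R := iter k f x.

Definition defines (f : Rdefinitions.R -> Rdefinitions.R) (x : Rdefinitions.R) (L : nat) (pi : 'S_L) : bool :=
  sorted (fun a b : nat => fiter f a x < fiter f b x)
         [seq nat_of_ord (pi i) | i <- enum 'I_L].

Definition maps_unit_interval (f : Rdefinitions.R -> Rdefinitions.R) : Prop :=
  forall x : Rdefinitions.R, 0 <= x <= 1 -> 0 <= f x <= 1.

From Stdlib Require Import Reals.
From HB Require Import structures.
From mathcomp Require Import all_boot all_order all_algebra all_fingroup.
From mathcomp Require Import Rstruct.
Set Implicit Arguments. Unset Strict Implicit. Unset Printing Implicit Defensive.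
Import Order.TTheory GRing.Theory Num.Theory.
Local Open Scope ring_scope.

(* The B-adic shift x |-> B x mod 1 works for every B >= K.  On a finite
   B-adic expansion 0.d_0 d_1 ... d_{n-1} it deletes the first digit, and two
   expansions whose first digits differ are ordered by those digits.  So if
   d_k is the position of k in pi (a digit < L <= B), the orbit of
   x = 0.d_0 ... d_{L-1} is ordered exactly as pi prescribes. *)

Definition shift (B : nat) (x : R) := B%:R * x - (Num.floor (B%:R * x))%:~R.

Definition expansion (B : nat) (d : seq nat) :=
  foldr (fun a (y : R) => (a%:R + y) / B%:R) 0 d.

(* Otherwise numerals given to [shift] would be parsed as Stdlib reals. *)
Arguments shift B%_nat x%_ring_scope.

Lemma shift_ge0 (B : nat) (x : R) : 0 <= shift B x.
Proof. by rewrite subr_ge0 floor_le. Qed.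

Lemma shift_lt1 (B : nat) (x : R) : shift B x < 1.
Proof. by rewrite ltrBlDl -[X in _ + X]/(1%:~R) -intrD floorD1_gt. Qed.

Lemma shift0 (B : nat) : shift B 0 = 0.
Proof. by rewrite /shift mulr0 floor0 subr0. Qed.

Lemma expansion_cons (B a : nat) (d : seq nat) :
  expansion B (a :: d) = (a%:R + expansion B d) / B%:R.
Proof. by []. Qed.

Lemma expansion_ge0_lt1 (B : nat) (d : seq nat) :
  all (ltn^~ B) d -> 0 <= expansion B d < 1.
Proof.
elim: d => [|a d IH] /=; first by rewrite lexx ltr01.
move=> /andP[aB /IH /andP[e_ge0 e_lt1]].
have B_gt0 : 0 < B%:R :> R by rewrite ltr0n (leq_ltn_trans _ aB).
rewrite divr_ge0 ?addr_ge0 ?ler0n ?(ltW B_gt0) //= ltr_pdivrMr // mul1r.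
apply: (lt_le_trans (y := a.+1%:R)); first by rewrite -addn1 natrD ltrD2l.
by rewrite ler_nat.
Qed.

Lemma shift_expansion_cons (B a : nat) (d : seq nat) :
  (a < B)%N -> all (ltn^~ B) d ->
  shift B (expansion B (a :: d)) = expansion B d.
Proof.
move=> aB /expansion_ge0_lt1 /andP[e_ge0 e_lt1].
have B_neq0 : B%:R != 0 :> R by rewrite pnatr_eq0 -lt0n (leq_ltn_trans _ aB).
rewrite /shift expansion_cons mulrC divfK //.
rewrite (@floor_def _ _ a%:Z); first by rewrite -pmulrn addrAC subrr add0r.
by rewrite -!pmulrn natrD lerDl e_ge0 ltrD2l.
Qed.

Lemma iter_shift_expansion (B : nat) (d : seq nat) (k : nat) :
  all (ltn^~ B) d ->
  iter k (shift B) (expansion B d) = expansion B (drop k d).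
Proof.
elim: d k => [k _ | a d IH [|k] //]; first by rewrite iter_fix ?shift0.
by move=> /andP[aB dB]; rewrite iterSr shift_expansion_cons // IH.
Qed.

Lemma expansion_lt_head (B a b : nat) (d e : seq nat) :
  (a < b)%N -> (b < B)%N -> all (ltn^~ B) d -> all (ltn^~ B) e ->
  expansion B (a :: d) < expansion B (b :: e).
Proof.
move=> ab bB /expansion_ge0_lt1 /andP[_ d_lt1] /expansion_ge0_lt1 /andP[e_ge0 _].
rewrite !expansion_cons ltr_pM2r ?invr_gt0 ?ltr0n ?(leq_ltn_trans _ bB) //.
apply: (lt_le_trans (y := a.+1%:R)); first by rewrite -addn1 natrD ltrD2l.
by rewrite -[leLHS]addr0 lerD // ler_nat.
Qed.

Lemma iter_shift_expansion_lt (B : nat) (d : seq nat) (a b : nat) :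
  all (ltn^~ B) d -> (a < size d)%N -> (b < size d)%N ->
  (nth 0%N d a < nth 0%N d b)%N ->
  iter a (shift B) (expansion B d) < iter b (shift B) (expansion B d).
Proof.
move=> dB a_lt b_lt ab.
have drop_dB k : all (ltn^~ B) (drop k d) by apply/allP=> y /mem_drop /(allP dB).
rewrite !iter_shift_expansion // (drop_nth 0%N a_lt) (drop_nth 0%N b_lt).
by apply: (@expansion_lt_head B) => //; exact: all_nthP 0%N dB b b_lt.
Qed.

Lemma shift_realizes_pattern (B L : nat) (pi : 'S_L) : (L <= B)%N ->
  exists x : R, 0 <= x <= 1 /\ defines (shift B) x pi.
Proof.
move=> LB; pose d := [seq nat_of_ord (pi^-1 k)%g | k <- enum 'I_L].
have size_d : size d = L by rewrite size_map size_enum_ord.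
have dB : all (ltn^~ B) d.
  by apply/allP=> _ /mapP[k _ ->]; exact: leq_trans (ltn_ord _) LB.
have nth_d i : nth 0%N d (pi i) = i.
  by rewrite (nth_map (pi i)) ?size_enum_ord // nth_ord_enum permK.
exists (expansion B d); split.
  by have /andP[-> /ltW ->] := expansion_ge0_lt1 dB.
rewrite /defines sorted_map.
apply: (@sub_sorted _ (relpre val ltn)); last first.
  by rewrite -sorted_map val_enum_ord iota_ltn_sorted.
by move=> i j /= ij; apply: (iter_shift_expansion_lt dB); rewrite ?size_d ?nth_d.
Qed.

Theorem corollary1 (K : nat) (hK : (2 <= K)%N) :
  exists f : Rdefinitions.R -> Rdefinitions.R, maps_unit_interval f /\
    forall (L : nat), (2 <= L)%N -> (L <= K)%N ->
    forall pi : 'S_L, exists x : Rdefinitions.R, 0 <= x <= 1 /\ defines f x pi.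
Proof.
exists (shift K); split.
  by move=> x _; rewrite shift_ge0 (ltW (shift_lt1 _ _)).
by move=> L _ LK pi; exact: shift_realizes_pattern pi LK.
Qed.
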